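(* A map $f:X\to Y$ between v-fibrant bisimplicial sets is a row-wise weak categorical equivalence (i.e. $f_{\star n}:X_{\star n}\to Y_{\star n}$ is a weak categorical equivalence for every $n\ge0$) if and only if $f_{\star0}:X_{\star0}\to Y_{\star0}$ is a weak categorical equivalence.
   Context: For a bisimplicial set $X$ and simplicial set $A$, $A\backslash X$ is the simplicial set whose $n$-simplices are maps $A\Box\Delta[n]\to X$, $(A\Box B)_{mn}=A_m\times B_n$. $X$ is v-fibrant if for every $m\ge0$ the map $\Delta[m]\backslash X\to\partial\Delta[m]\backslash X$ is a Kan fibration. $X_{\star n}$ is the $n$-th row. A map of simplicial sets $u:A\to B$ is a weak categorical equivalence if $\tau_0(B,Z)\to\tau_0(A,Z)$ is bijective for every quasi-category $Z$, where $\tau_0(A,Z)$ is the set of isomorphism classes of objects of the fundamental category of $Z^A$. *)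

From Stdlib Require Import Relations FunctionalExtensionality ProofIrrelevance.
From mathcomp Require Import all_boot.

Set Implicit Arguments.
Unset Strict Implicit.
Unset Printing Implicit Defensive.

Definition monob m n (f : {ffun 'I_m.+1 -> 'I_n.+1}) : bool :=
  [forall i : 'I_m.+1, forall j : 'I_m.+1, (i <= j) ==> (f i <= f j)].

Definition hom m n := {f : {ffun 'I_m.+1 -> 'I_n.+1} | monob f}.

Definition hfun m n (f : hom m n) : 'I_m.+1 -> 'I_n.+1 := fun i => sval f i.

Lemma hom_eq m n (f g : hom m n) : (forall i, hfun f i = hfun g i) -> f = g.
Proof. by move=> H; apply: val_inj; apply/ffunP => i; exact: H. Qed.

Lemma mk_hom_proof m n (h : 'I_m.+1 -> 'I_n.+1) :
  (forall i j : 'I_m.+1, i <= j -> h i <= h j) -> monob (finfun h).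
Proof.
move=> H; apply/forallP => i; apply/forallP => j; apply/implyP => /H.
by rewrite !ffunE.
Qed.

Definition mk_hom m n (h : 'I_m.+1 -> 'I_n.+1)
  (H : forall i j : 'I_m.+1, i <= j -> h i <= h j) : hom m n :=
  exist _ (finfun h) (mk_hom_proof H).

Lemma mk_homE m n h H i : hfun (@mk_hom m n h H) i = h i.
Proof. by rewrite /hfun /= ffunE. Qed.

Lemma hom_mono m n (f : hom m n) (i j : 'I_m.+1) : i <= j -> hfun f i <= hfun f j.
Proof.
case: f => f Hf; rewrite /hfun /= => Hij.
by move/forallP: Hf => /(_ i) /forallP /(_ j) /implyP; apply.
Qed.

Definition hid n : hom n n := @mk_hom n n id (fun i j H => H).

Definition hcomp m n p (g : hom n p) (f : hom m n) : hom m p :=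
  @mk_hom m p (fun i => hfun g (hfun f i))
    (fun i j H => hom_mono g (hom_mono f H)).

Lemma hcomp_id_l m n (f : hom m n) : hcomp (hid n) f = f.
Proof. by apply: hom_eq => i; rewrite !mk_homE. Qed.

Lemma hcomp_id_r m n (f : hom m n) : hcomp f (hid m) = f.
Proof. by apply: hom_eq => i; rewrite !mk_homE. Qed.

Lemma hcompA m n p q (h : hom p q) (g : hom n p) (f : hom m n) :
  hcomp h (hcomp g f) = hcomp (hcomp h g) f.
Proof. by apply: hom_eq => i; rewrite !mk_homE. Qed.

Definition coface n (i : 'I_n.+2) : hom n n.+1 :=
  @mk_hom n n.+1 (lift i) (fun a b H => ltac:(by rewrite /= leq_bump2)).

Definition hconst m : hom m 0 := @mk_hom m 0 (fun _ => ord0) (fun _ _ _ => leqnn 0).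

Record sSet := SSet {
  sx :> nat -> Type;
  act : forall m n, hom m n -> sx n -> sx m;
  act_id : forall n (x : sx n), act (hid n) x = x;
  act_comp : forall m n p (f : hom m n) (g : hom n p) (x : sx p),
      act (hcomp g f) x = act f (act g x)
}.
Arguments act {s m n} f x.

Record sMap (X Y : sSet) := SMap {
  fn : forall n, X n -> Y n;
  fn_nat : forall m n (f : hom m n) (x : X n), fn (act f x) = act f (fn x)
}.
Arguments fn {X Y} s {n} x.

Lemma sMap_eq (X Y : sSet) (f g : sMap X Y) :
  (forall n (x : X n), fn f x = fn g x) -> f = g.
Proof.
case: f => f Hf; case: g => g Hg /= H.
have E : f = g.
  by apply: functional_extensionality_dep => n; apply: functional_extensionality.
subst g; f_equal; apply: proof_irrelevance.
Qed.

Definition sId (X : sSet) : sMap X X := @SMap X X (fun n x => x) (fun _ _ _ _ => erefl).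

Lemma sComp_nat (X Y Z : sSet) (g : sMap Y Z) (f : sMap X Y) m n (h : hom m n) (x : X n) :
  fn g (fn f (act h x)) = act h (fn g (fn f x)).
Proof. by rewrite !fn_nat. Qed.

Definition sComp (X Y Z : sSet) (g : sMap Y Z) (f : sMap X Y) : sMap X Z :=
  @SMap X Z (fun n x => fn g (fn f x)) (@sComp_nat X Y Z g f).

Definition Delta (n : nat) : sSet :=
  @SSet (fun k => hom k n) (fun m k f x => hcomp x f)
    (fun k x => hcomp_id_r x)
    (fun m k p f g x => hcompA x g f).

Definition Dmap m n (f : hom m n) : sMap (Delta m) (Delta n) :=
  @SMap (Delta m) (Delta n) (fun k x => hcomp f x)
    (fun a b h x => hcompA f x h).

Definition SubS (X : sSet) (P : forall n, X n -> bool)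
  (HP : forall m n (f : hom m n) (x : X n), P n x -> P m (act f x)) : sSet.
Proof.
refine (@SSet (fun n => {x : X n | P n x})
               (fun m n f x => exist _ (act f (sval x)) (HP m n f (sval x) (svalP x)))
               _ _).
- by move=> n [x Hx]; apply: val_inj; rewrite /= act_id.
- by move=> m n p f g [x Hx]; apply: val_inj; rewrite /= act_comp.
Defined.

Definition subincl (X : sSet) P HP : sMap (@SubS X P HP) X :=
  @SMap (@SubS X P HP) X (fun n x => sval x) (fun _ _ _ _ => erefl).

Definition bdryb n k (f : hom k n) : bool :=
  ~~ [forall i : 'I_n.+1, exists x : 'I_k.+1, hfun f x == i].

Lemma bdry_stable n m k (f : hom m k) (x : hom k n) :
  bdryb x -> bdryb (hcomp x f).
Proof.
apply: contra => /forallP H; apply/forallP => i.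
case/existsP: (H i) => y /eqP <-; apply/existsP; exists (hfun f y).
by rewrite mk_homE.
Qed.

Definition Bdry n : sSet := @SubS (Delta n) (@bdryb n) (fun m k f x => @bdry_stable n m k f x).
Definition bdry_incl n : sMap (Bdry n) (Delta n) := subincl _.

Definition hornb n (k : 'I_n.+1) j (f : hom j n) : bool :=
  [exists i : 'I_n.+1, (i != k) && [forall x : 'I_j.+1, hfun f x != i]].

Lemma horn_stable n (k : 'I_n.+1) m j (f : hom m j) (x : hom j n) :
  hornb k x -> hornb k (hcomp x f).
Proof.
case/existsP => i /andP [Hik /forallP Hi]; apply/existsP; exists i.
by rewrite Hik; apply/forallP => y; rewrite mk_homE.
Qed.

Definition Horn n (k : 'I_n.+1) : sSet :=
  @SubS (Delta n) (@hornb n k) (fun m j f x => @horn_stable n k m j f x).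
Definition horn_incl n (k : 'I_n.+1) : sMap (Horn k) (Delta n) := subincl _.

(* Kan fibrations: right lifting property against all horn inclusions
   Lambda^k[n] -> Delta[n], n >= 1, 0 <= k <= n *)
Definition kan_fibration (E B : sSet) (p : sMap E B) : Prop :=
  forall n (k : 'I_n.+2) (a : sMap (Horn k) E) (b : sMap (Delta n.+1) B),
    (forall j (x : Horn k j), fn p (fn a x) = fn b (fn (horn_incl k) x)) ->
    exists l : sMap (Delta n.+1) E,
      (forall j (x : Horn k j), fn l (fn (horn_incl k) x) = fn a x) /\
      (forall j (x : Delta n.+1 j), fn p (fn l x) = fn b x).

Definition quasi_category (Z : sSet) : Prop :=
  forall n (k : 'I_n.+1), 0 < k < n -> forall a : sMap (Horn k) Z,
    exists l : sMap (Delta n) Z,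
      forall j (x : Horn k j), fn l (fn (horn_incl k) x) = fn a x.

Definition sProd (A B : sSet) : sSet.
Proof.
refine (@SSet (fun n => (A n * B n)%type)
          (fun m n f x => (act f x.1, act f x.2)) _ _).
- by move=> n [a b]; rewrite /= !act_id.
- by move=> m n p f g [a b]; rewrite /= !act_comp.
Defined.

Definition prodmap (A A' B B' : sSet) (u : sMap A A') (v : sMap B B') :
  sMap (sProd A B) (sProd A' B') :=
  @SMap (sProd A B) (sProd A' B') (fun n x => (fn u x.1, fn v x.2))
    (fun m n f x => ltac:(by rewrite /= !fn_nat)).

Definition FunS (A Z : sSet) : sSet.
Proof.
refine (@SSet (fun n => sMap (sProd A (Delta n)) Z)
          (fun m n f g => sComp g (prodmap (sId A) (Dmap f))) _ _).
- by move=> n g; apply: sMap_eq => k [a x] /=; rewrite hcomp_id_l.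
- by move=> m n p f g h; apply: sMap_eq => k [a x] /=; rewrite hcompA.
Defined.

(* The fundamental category tau_1 Z, presented by generators (edges)  *)
(* and relations (s_0 x = id_x, d_1 t = d_0 t o d_2 t); we only need  *)
(* its isomorphism relation on objects (= vertices).                  *)
Section Tau1.
Variable Z : sSet.

Definition esrc (e : Z 1) : Z 0 := act (coface (@inord 1 1)) e.
Definition etgt (e : Z 1) : Z 0 := act (coface (@inord 1 0)) e.
Definition edeg (v : Z 0) : Z 1 := act (hconst 1) v.
Definition tface (i : nat) (t : Z 2) : Z 1 := act (coface (@inord 2 i)) t.

Fixpoint is_chain (x : Z 0) (p : seq (Z 1)) (y : Z 0) : Prop :=
  match p with
  | [::] => x = y
  | e :: q => esrc e = x /\ is_chain (etgt e) q y
  end.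

Inductive hstep : seq (Z 1) -> seq (Z 1) -> Prop :=
| hstep_deg a b v : hstep (a ++ edeg v :: b) (a ++ b)
| hstep_tri a b t : hstep (a ++ tface 2 t :: tface 0 t :: b) (a ++ tface 1 t :: b).

(* equality of morphisms x -> y in tau_1 Z *)
Definition hequiv (x y : Z 0) : relation (seq (Z 1)) :=
  clos_refl_sym_trans _
    (fun p q => [/\ is_chain x p y, is_chain x q y & hstep p q]).

Definition tau1_iso (x y : Z 0) : Prop :=
  exists p q, [/\ is_chain x p y, is_chain y q x,
    hequiv x x (p ++ q) [::] & hequiv y y (q ++ p) [::]].
End Tau1.

(* weak categorical equivalence: tau_0(B,Z) -> tau_0(A,Z) bijective
   for every quasi-category Z, where tau_0(A,Z) is the set of
   isomorphism classes of objects of tau_1(Z^A); the map is induced by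
   precomposition with u x Delta[0] on objects of Z^B. *)
Definition wce (A B : sSet) (u : sMap A B) : Prop :=
  forall Z : sSet, quasi_category Z ->
    let pre (h : FunS B Z 0) : FunS A Z 0 :=
      sComp h (prodmap u (sId (Delta 0))) in
    (forall g : FunS A Z 0, exists h : FunS B Z 0, tau1_iso (pre h) g) /\
    (forall h1 h2 : FunS B Z 0,
        tau1_iso (pre h1) (pre h2) -> tau1_iso h1 h2).

Record bsSet := BSSet {
  bx :> nat -> nat -> Type;
  bact : forall m m' n n', hom m' m -> hom n' n -> bx m n -> bx m' n';
  bact_id : forall m n (x : bx m n), bact (hid m) (hid n) x = x;
  bact_comp : forall m m' m'' n n' n'' (f : hom m' m) (f' : hom m'' m')
      (g : hom n' n) (g' : hom n'' n') (x : bx m n),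
      bact (hcomp f f') (hcomp g g') x = bact f' g' (bact f g x)
}.
Arguments bact {b m m' n n'} f g x.

Record bMap (X Y : bsSet) := BMap {
  bfn : forall m n, X m n -> Y m n;
  bfn_nat : forall m m' n n' (f : hom m' m) (g : hom n' n) (x : X m n),
      bfn (bact f g x) = bact f g (bfn x)
}.
Arguments bfn {X Y} b {m n} x.

Lemma bMap_eq (X Y : bsSet) (f g : bMap X Y) :
  (forall m n (x : X m n), bfn f x = bfn g x) -> f = g.
Proof.
case: f => f Hf; case: g => g Hg /= H.
have E : f = g.
  apply: functional_extensionality_dep => m.
  apply: functional_extensionality_dep => n; exact: functional_extensionality.
subst g; f_equal; apply: proof_irrelevance.
Qed.

Lemma bComp_nat (X Y Z : bsSet) (g : bMap Y Z) (f : bMap X Y) m m' n n'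
  (f' : hom m' m) (g' : hom n' n) (x : X m n) :
  bfn g (bfn f (bact f' g' x)) = bact f' g' (bfn g (bfn f x)).
Proof. by rewrite !bfn_nat. Qed.

Definition bComp (X Y Z : bsSet) (g : bMap Y Z) (f : bMap X Y) : bMap X Z :=
  @BMap X Z (fun m n x => bfn g (bfn f x)) (@bComp_nat X Y Z g f).

Definition box (A B : sSet) : bsSet.
Proof.
refine (@BSSet (fun m n => (A m * B n)%type)
          (fun m m' n n' f g x => (act f x.1, act g x.2)) _ _).
- by move=> m n [a b]; rewrite /= !act_id.
- by move=> m m' m'' n n' n'' f f' g g' [a b]; rewrite /= !act_comp.
Defined.

Definition boxmap (A A' B B' : sSet) (u : sMap A A') (v : sMap B B') :
  bMap (box A B) (box A' B') :=
  @BMap (box A B) (box A' B') (fun m n x => (fn u x.1, fn v x.2))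
    (fun _ _ _ _ f g x => ltac:(by rewrite /= !fn_nat)).

Definition Under (A : sSet) (X : bsSet) : sSet.
Proof.
refine (@SSet (fun n => bMap (box A (Delta n)) X)
          (fun m n f g => bComp g (boxmap (sId A) (Dmap f))) _ _).
- by move=> n g; apply: bMap_eq => k j [a x] /=; rewrite hcomp_id_l.
- by move=> m n p f g h; apply: bMap_eq => k j [a x] /=; rewrite hcompA.
Defined.

Definition Under_map (A B : sSet) (u : sMap A B) (X : bsSet) :
  sMap (Under B X) (Under A X) :=
  @SMap (Under B X) (Under A X)
    (fun n g => bComp g (boxmap u (sId (Delta n))))
    (fun m n f g => ltac:(by apply: bMap_eq => k j [a x])).

Definition vfibrant (X : bsSet) : Prop :=
  forall m, kan_fibration (Under_map (bdry_incl m) X).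

Definition row (X : bsSet) (n : nat) : sSet.
Proof.
refine (@SSet (fun m => X m n) (fun m m' f x => bact f (hid n) x) _ _).
- by move=> m x; rewrite bact_id.
- by move=> m m' m'' f g x; rewrite -bact_comp hcomp_id_l.
Defined.

Definition rowmap (X Y : bsSet) (f : bMap X Y) (n : nat) : sMap (row X n) (row Y n) :=
  @SMap (row X n) (row Y n) (fun m x => bfn f x)
    (fun _ _ g x => bfn_nat f g (hid n) x).

(* Restricting along the vertex [0 : [0] -> [n]] gives maps
   [p_n : X_{*n} -> X_{*0}] with [p_n f_{*n} = f_{*0} p_n]; by two-out-of-three
   it suffices that every such [p_n] is a weak categorical equivalence.
   When [X] is v-fibrant, [p_n] is a trivial fibration: transposed, a lifting
   problem for [∂Δ[m] ⊂ Δ[m]] against [p_n] becomes one for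
   [0 : Δ[0] -> Δ[n]] against the Kan fibration [Δ[m]\X -> ∂Δ[m]\X], which is
   solved by filling the horns [Λ^0] of the faces of [Δ[n]] containing [0],
   in order of dimension.  Skeletal induction gives a trivial fibration [p] a
   section [s] and a homotopy [id ~ s p] parametrised by the nerve [J] of the
   contractible groupoid on two objects, and such a homotopy makes every
   [g : A -> Z] isomorphic to [g s p] in [τ_1(Z^A)]; hence [p] induces
   bijections on [τ_0(-, Z)] for every [Z]. *)

From Stdlib Require Import Relations ProofIrrelevance ClassicalEpsilon Classical.
From mathcomp Require Import all_boot.

Set Implicit Arguments.
Unset Strict Implicit.
Unset Printing Implicit Defensive.

(** * The simplex category *)

Lemma hcompE m n p (g : hom n p) (f : hom m n) i :
  hfun (hcomp g f) i = hfun g (hfun f i).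
Proof. by rewrite mk_homE. Qed.

Lemma hidE n i : hfun (hid n) i = i.
Proof. by rewrite mk_homE. Qed.

Lemma hom_to0_eq k (f g : hom k 0) : f = g.
Proof. by apply: hom_eq => i; rewrite (ord1 (hfun f i)) (ord1 (hfun g i)). Qed.

Definition surj_hom m k (s : hom m k) : Prop := forall i, exists x, hfun s x = i.

Lemma surj_homP m k (s : hom m k) : reflect (surj_hom s) (~~ bdryb s).
Proof.
rewrite /bdryb negbK; apply: (iffP forallP) => [H i | H i].
  by case/existsP: (H i) => x /eqP <-; exists x.
by case: (H i) => x <-; apply/existsP; exists x.
Qed.

Lemma surj_hom_section_at m k (s : hom m k) (i : 'I_m.+1) : surj_hom s ->
  exists d : hom k m, hcomp s d = hid k /\ hfun d (hfun s i) = i.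
Proof.
move=> Hs.
pose d0 (j : 'I_k.+1) : 'I_m.+1 :=
  if j == hfun s i then i else odflt i [pick x | hfun s x == j].
have sd0 j : hfun s (d0 j) = j.
  rewrite /d0; case: eqP => [->//|_].
  case: pickP => [x /eqP //|H]; case: (Hs j) => x Hx.
  by move: (H x); rewrite Hx eqxx.
have d0_mono (a b : 'I_k.+1) : a <= b -> d0 a <= d0 b.
  move=> Hab; rewrite leqNgt; apply/negP => Hlt.
  have := hom_mono s (ltnW Hlt); rewrite !sd0 => Hba.
  have Eab : a = b by apply: val_inj; apply/eqP; rewrite eqn_leq Hab Hba.
  by rewrite Eab ltnn in Hlt.
exists (mk_hom d0_mono); split; last by rewrite mk_homE /d0 eqxx.
by apply: hom_eq => j; rewrite !mk_homE sd0.
Qed.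

Lemma bdryb_factor j k (f : hom j k) : bdryb f ->
  exists k1, k1 < k /\ exists (t : hom j k1) (u : hom k1 k), f = hcomp u t.
Proof.
rewrite /bdryb => /forallPn [v /existsPn Hv].
case: k f v Hv => [|k] f v Hv.
  by move: (Hv ord0); rewrite (ord1 v) (ord1 (hfun f ord0)) eqxx.
have Hne x : v != hfun f x by rewrite eq_sym Hv.
pose t (x : 'I_j.+1) : 'I_k.+1 := sval (unlift_some (Hne x)).
have Ht x : hfun f x = lift v (t x).
  by rewrite /t; case: (unlift_some (Hne x)) => y /= ->.
have t_mono (a b : 'I_j.+1) : a <= b -> t a <= t b.
  by move=> Hab; have := hom_mono f Hab; rewrite !Ht /= leq_bump2.
exists k; split => //; exists (mk_hom t_mono), (coface v).
by apply: hom_eq => x; rewrite !mk_homE Ht.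
Qed.

Lemma ltn_bdryb k1 k (u : hom k1 k) : k1 < k -> bdryb u.
Proof.
move=> Hk; case Hb: (bdryb u) => //.
move/negbT: Hb => /surj_homP /(surj_hom_section_at ord0) [d [Hd _]].
have d_inj : injective (hfun d).
  by move=> a b E; rewrite -(hidE a) -(hidE b) -Hd !hcompE E.
by have := leq_card _ d_inj; rewrite !card_ord ltnS leqNgt Hk.
Qed.

(* A strictly increasing [f] satisfies [i <= f i] counting up from [0] and
   [f i <= i] counting down from [k]. *)
Lemma strict_endo_hid k (f : hom k k) :
  (forall a b : 'I_k.+1, a < b -> hfun f a < hfun f b) -> f = hid k.
Proof.
move=> Hf.
have up (i : 'I_k.+1) : i <= hfun f i.
  case: i => i; elim: i => [|i IH] Hi //=.
  have Hi' : i < k.+1 by apply: ltnW.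
  exact: leq_ltn_trans (IH Hi') (Hf (Ordinal Hi') (Ordinal Hi) (ltnSn i)).
have down c (i : 'I_k.+1) : i + c = k -> hfun f i <= i.
  elim: c i => [|c IH] i Hic; first by rewrite addn0 in Hic; rewrite Hic -ltnS.
  have Hi1 : i.+1 < k.+1.
    by rewrite ltnS (leq_trans _ (_ : (i + c).+1 <= k)) ?ltnS ?leq_addr // -addnS Hic.
  have := IH (Ordinal Hi1); rewrite /= addSnnS => /(_ Hic) h.
  by rewrite -ltnS; exact: leq_trans (Hf i (Ordinal Hi1) (ltnSn i)) h.
apply: hom_eq => i; rewrite hidE; apply: val_inj; apply/eqP.
by rewrite eqn_leq up (down (k - i)) // subnKC // -ltnS.
Qed.

Lemma surj_endo_hid k (t : hom k k) : surj_hom t -> t = hid k.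
Proof.
move=> /(surj_hom_section_at ord0) [d [Hd _]].
have td j : hfun t (hfun d j) = j by rewrite -hcompE Hd hidE.
have d_strict (a b : 'I_k.+1) : a < b -> hfun d a < hfun d b.
  move=> Hab; rewrite ltn_neqAle hom_mono ?(ltnW Hab) // andbT.
  apply/negP => /eqP/val_inj/(congr1 (hfun t)); rewrite !td => Eab.
  by rewrite Eab ltnn in Hab.
by rewrite -[t]hcomp_id_r -{1}(strict_endo_hid d_strict).
Qed.

(** * The Eilenberg–Zilber lemma *)

Definition nondegenerate (K : sSet) k (y : K k) : Prop :=
  forall k' (t : hom k k') (z : K k'), k' < k -> act t z <> y.

Lemma nondegenerate_dim_le (K : sSet) k (y : K k) k' (t : hom k k') (z : K k') :
  nondegenerate y -> act t z = y -> k <= k'.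
Proof. by move=> Hy E; rewrite leqNgt; apply/negP => H; exact: Hy _ _ _ H E. Qed.

Lemma nondegenerate_bdryb_ltn (K : sSet) k (y : K k) k' (t : hom k k') (z : K k') :
  nondegenerate y -> act t z = y -> bdryb t -> k < k'.
Proof.
move=> Hy E /bdryb_factor [k1 [Hk1 [t1 [u Et]]]].
rewrite Et act_comp in E.
exact: leq_ltn_trans (nondegenerate_dim_le Hy E) Hk1.
Qed.

Lemma eilenberg_zilber_exists (K : sSet) k (z : K k) m (t : hom m k) :
  exists k' (s : hom m k') (y : K k'),
    [/\ k' <= k, surj_hom s, nondegenerate y & act s y = act t z].
Proof.
elim/ltn_ind: k z m t => k IH z m t.
case Hb: (bdryb t).
  have [k1 [Hk1 [t1 [u ->]]]] := bdryb_factor Hb.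
  have [k' [s [y [Hk' Hs Hy E]]]] := IH k1 Hk1 (act u z) m t1.
  exists k', s, y; split => //; first exact: leq_trans Hk' (ltnW Hk1).
  by rewrite E act_comp.
have Ht : surj_hom t by apply/surj_homP; rewrite Hb.
have [Hz | Hz] := classic (nondegenerate z); first by exists k, t, z.
have [k1 [t1 [z1 [Hk1 Ez]]]] :
    exists k1 (t1 : hom k k1) (z1 : K k1), k1 < k /\ act t1 z1 = z.
  by apply: NNPP => HH; apply: Hz => k1 t1 z1 Hk1 E; apply: HH; exists k1, t1, z1.
have [k' [s [y [Hk' Hs Hy E]]]] := IH k1 Hk1 z1 m (hcomp t1 t).
exists k', s, y; split => //; first exact: leq_trans Hk' (ltnW Hk1).
by rewrite E act_comp Ez.
Qed.

Lemma act_section (K : sSet) m k (s : hom m k) (d : hom k m) (y : K k) :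
  hcomp s d = hid k -> act d (act s y) = y.
Proof. by move=> Hd; rewrite -act_comp Hd act_id. Qed.

Lemma eilenberg_zilber_dim (K : sSet) m k k' (s : hom m k) (s' : hom m k')
    (y : K k) (y' : K k') :
  surj_hom s -> surj_hom s' -> nondegenerate y -> nondegenerate y' ->
  act s y = act s' y' -> k = k'.
Proof.
move=> Hs Hs' Hy Hy' E.
have [d [Hd _]] := surj_hom_section_at ord0 Hs.
have [d' [Hd' _]] := surj_hom_section_at ord0 Hs'.
have E1 : act d (act s' y') = y by rewrite -E act_section.
have E2 : act d' (act s y) = y' by rewrite E act_section.
rewrite -act_comp in E1; rewrite -act_comp in E2.
by apply/eqP; rewrite eqn_leq (nondegenerate_dim_le Hy E1) (nondegenerate_dim_le Hy' E2).
Qed.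

Lemma eilenberg_zilber_unique (K : sSet) m k (s s' : hom m k) (y y' : K k) :
  surj_hom s -> surj_hom s' -> nondegenerate y -> nondegenerate y' ->
  act s y = act s' y' -> y = y' /\ s = s'.
Proof.
move=> Hs Hs' Hy Hy' E.
have endo_hid (t : hom k k) (w : K k) : act t w = y -> t = hid k.
  move=> Ew; apply: surj_endo_hid; apply/surj_homP/negP => Hb.
  by have := nondegenerate_bdryb_ltn Hy Ew Hb; rewrite ltnn.
have [d [Hd _]] := surj_hom_section_at ord0 Hs.
have E1 : act (hcomp s' d) y' = y by rewrite act_comp -E act_section.
have Eyy : y = y' by rewrite -E1 (endo_hid _ _ E1) act_id.
subst y'; split => //; apply: hom_eq => i.
have [d' [Hd' Hd'i]] := surj_hom_section_at i Hs'.
have E2 : act (hcomp s d') y = y by rewrite act_comp E act_section.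
have := endo_hid _ _ E2 => /(congr1 (fun t => hfun t (hfun s' i))).
by rewrite hcompE hidE Hd'i.
Qed.

Record ez_decomposition (K : sSet) m (x : K m) := EZDecomposition {
  ez_dim : nat;
  ez_degeneracy : hom m ez_dim;
  ez_root : K ez_dim;
  _ : surj_hom ez_degeneracy;
  _ : nondegenerate ez_root;
  _ : act ez_degeneracy ez_root = x }.

Lemma ez_decomposition_inhabited (K : sSet) m (x : K m) :
  inhabited (ez_decomposition x).
Proof.
have [k [s [y [_ Hs Hy E]]]] := eilenberg_zilber_exists x (hid m).
by constructor; apply: (EZDecomposition Hs Hy); rewrite E act_id.
Qed.

Definition ez_decomp (K : sSet) m (x : K m) : ez_decomposition x :=
  epsilon (ez_decomposition_inhabited x) (fun _ => True).

(** * Relative skeletal lifting against trivial fibrations *)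

Definition trivial_fibration (E B : sSet) (p : sMap E B) : Prop :=
  forall m (a : sMap (Bdry m) E) (b : sMap (Delta m) B),
    (forall j (x : Bdry m j), fn p (fn a x) = fn b (fn (bdry_incl m) x)) ->
    exists l : sMap (Delta m) E,
      (forall j (x : Bdry m j), fn l (fn (bdry_incl m) x) = fn a x) /\
      (forall j (x : Delta m j), fn p (fn l x) = fn b x).

Definition yoneda (S : sSet) k (s : S k) : sMap (Delta k) S :=
  @SMap (Delta k) S (fun j f => act f s) (fun j j' f g => act_comp f g s).

Section RelativeSkeletalLift.
Variables (K E B : sSet) (p : sMap E B) (L : forall m, K m -> Prop).
Hypothesis L_act : forall m m' (f : hom m' m) x, L x -> L (act f x).
Variable a : forall m (x : K m), L x -> E m.
Arguments a {m} x _.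
Hypothesis a_nat : forall m m' (f : hom m' m) x h h', a (act f x) h' = act f (a x h).
Variable b : sMap K B.
Hypothesis a_over : forall m (x : K m) h, fn p (a x h) = fn b x.
Hypothesis p_trivial : trivial_fibration p.

(* [in_skel r] is the [(r-1)]-skeleton of [K]. *)
Definition in_skel r m (x : K m) : Prop :=
  exists k (t : hom m k) (z : K k), k < r /\ act t z = x.
Definition in_relskel r m (x : K m) : Prop := in_skel r x \/ L x.

Lemma relskel_act r m m' (f : hom m' m) x : in_relskel r x -> in_relskel r (act f x).
Proof.
case=> [[k [t [z [Hk Ex]]]] | HL]; last by right; apply: L_act.
by left; exists k, (hcomp t f), z; rewrite act_comp Ex.
Qed.

Lemma relskel_mono r s m (x : K m) : r <= s -> in_relskel r x -> in_relskel s x.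
Proof.
move=> Hrs [[k [t [z [Hk Ex]]]] | HL]; last by right.
by left; exists k, t, z; split => //; exact: leq_trans Hk Hrs.
Qed.

Lemma relskel_self m (x : K m) : in_relskel m.+1 x.
Proof. by left; exists m, (hid m), x; rewrite act_id. Qed.

Lemma bdry_relskel r k (y : K k) j (f : hom j k) :
  bdryb f -> k <= r -> in_relskel r (act f y).
Proof.
move=> /bdryb_factor [k1 [Hk1 [t1 [u ->]]]] Hk; left.
exists k1, t1, (act u y); split; first exact: leq_trans Hk1 Hk.
by rewrite act_comp.
Qed.

Record relskel_lift r := RelSkelLift {
  rlift : forall m (x : K m), in_relskel r x -> E m;
  rlift_nat : forall m m' (f : hom m' m) (x : K m)
      (h : in_relskel r x) (h' : in_relskel r (act f x)),
    rlift h' = act f (rlift h);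
  rlift_over : forall m (x : K m) (h : in_relskel r x), fn p (rlift h) = fn b x;
  rlift_ext : forall m (x : K m) (h : L x) (h' : in_relskel r x), rlift h' = a x h }.

Lemma rlift_eq r (P : relskel_lift r) m (x x' : K m)
    (h : in_relskel r x) (h' : in_relskel r x') :
  x = x' -> rlift P h = rlift P h'.
Proof. by move=> Ex; subst x'; rewrite (proof_irrelevance _ h h'). Qed.

Lemma relskel0_L m (x : K m) : in_relskel 0 x -> L x.
Proof. by case=> // [[k [t [z []]]]]. Qed.

Definition rlift0 : relskel_lift 0.
Proof.
refine (@RelSkelLift 0 (fun m x h => a x (relskel0_L h)) _ _ _).
- by move=> m m' f x h h'; apply: a_nat.
- by move=> m x h; apply: a_over.
- by move=> m x h h'; rewrite (proof_irrelevance _ (relskel0_L h') h).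
Defined.

Section Succ.
Variables (r : nat) (P : relskel_lift r).

Definition bdry_rlift k (y : K k) (hk : k <= r) : sMap (Bdry k) E.
Proof.
refine (@SMap (Bdry k) E (fun j f => rlift P (bdry_relskel y (svalP f) hk)) _).
move=> j j' f [g Hg] /=.
rewrite -(rlift_nat P _ (relskel_act f (bdry_relskel y Hg hk))).
by apply: rlift_eq; rewrite act_comp.
Defined.

Lemma bdry_rlift_over k (y : K k) (hk : k <= r) j (x : Bdry k j) :
  fn p (fn (bdry_rlift y hk) x) = fn (yoneda (fn b y)) (fn (bdry_incl k) x).
Proof. by rewrite /= rlift_over fn_nat. Qed.

Definition fill k (y : K k) (hk : k <= r) : E k :=
  fn (proj1_sig (constructive_indefinite_description _
                   (p_trivial (bdry_rlift_over y hk)))) (hid k).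

Lemma fill_bdry k (y : K k) (hk : k <= r) j (f : hom j k) (hf : bdryb f) :
  act f (fill y hk) = rlift P (bdry_relskel y hf hk).
Proof.
rewrite /fill; case: (constructive_indefinite_description _ _) => l [Hl _] /=.
by rewrite -fn_nat /= hcomp_id_l (Hl j (exist _ f hf)); apply: rlift_eq.
Qed.

Lemma fill_over k (y : K k) (hk : k <= r) : fn p (fill y hk) = fn b y.
Proof.
rewrite /fill; case: (constructive_indefinite_description _ _) => l [_ ->] /=.
by rewrite act_id.
Qed.

Lemma fill_irr k (y : K k) (hk hk' : k <= r) : fill y hk = fill y hk'.
Proof. by rewrite (proof_irrelevance _ hk hk'). Qed.

Lemma relskel_succ_dim m (x : K m) k (s : hom m k) (y : K k) :
  surj_hom s -> nondegenerate y -> act s y = x ->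
  in_relskel r.+1 x -> ~ in_relskel r x -> k <= r.
Proof.
move=> Hs Hy Ex [[k0 [t [z [Hk0 Ez]]]] | HL] Hn; last by case: Hn; right.
have [k2 [s2 [y2 [Hk2 Hs2 Hy2 E2]]]] := eilenberg_zilber_exists z t.
rewrite (eilenberg_zilber_dim Hs Hs2 Hy Hy2) ?Ex ?E2 ?Ez //.
exact: leq_trans Hk2 Hk0.
Qed.

(* New simplices are degeneracies of nondegenerate [r]-simplices outside [L];
   these are filled using [p_trivial]. *)
Definition rlift_succ_fn m (x : K m) (h : in_relskel r.+1 x) : E m :=
  match excluded_middle_informative (in_relskel r x) with
  | left h0 => rlift P h0
  | right hn =>
      let: EZDecomposition k s y Hs Hy Ex := ez_decomp x in
      act s (fill y (relskel_succ_dim Hs Hy Ex h hn))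
  end.

Lemma rlift_succ_fn_prev m (x : K m) (h : in_relskel r.+1 x) (h0 : in_relskel r x) :
  rlift_succ_fn h = rlift P h0.
Proof.
rewrite /rlift_succ_fn; case: excluded_middle_informative => // h1.
by rewrite (proof_irrelevance _ h1 h0).
Qed.

Lemma rlift_succ_fn_new m (x : K m) (h : in_relskel r.+1 x)
    k (s : hom m k) (y : K k) (hk : k <= r) :
  ~ in_relskel r x -> surj_hom s -> nondegenerate y -> act s y = x ->
  rlift_succ_fn h = act s (fill y hk).
Proof.
move=> Hn Hs Hy Ex; rewrite /rlift_succ_fn; case: excluded_middle_informative => // hn.
case: (ez_decomp x) => k0 s0 y0 Hs0 Hy0 Ex0.
move: (relskel_succ_dim _ _ _ _ _) => hk0.
have Ek := eilenberg_zilber_dim Hs0 Hs Hy0 Hy (etrans Ex0 (esym Ex)).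
subst k0; have [-> ->] := eilenberg_zilber_unique Hs0 Hs Hy0 Hy (etrans Ex0 (esym Ex)).
by rewrite (fill_irr y hk0 hk).
Qed.

Lemma rlift_succ_fn_act k (y : K k) (hk : k <= r) m (s : hom m k) (x : K m)
    (h : in_relskel r.+1 x) :
  nondegenerate y -> ~ in_relskel r y -> act s y = x ->
  rlift_succ_fn h = act s (fill y hk).
Proof.
move=> Hy Hny Ex; subst x; case Hb: (bdryb s).
  have [k1 [Hk1 [t1 [u Es]]]] := bdryb_factor Hb; subst s.
  have Hu := ltn_bdryb u Hk1.
  rewrite (rlift_succ_fn_prev h (bdry_relskel y Hb hk)) [RHS]act_comp (fill_bdry y hk Hu).
  rewrite -(rlift_nat P _ (relskel_act t1 (bdry_relskel y Hu hk))).
  by apply: rlift_eq; rewrite act_comp.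
have Hs : surj_hom s by apply/surj_homP; rewrite Hb.
apply: rlift_succ_fn_new => // -[[k0 [t [z [Hk0 Ez]]]] | HL]; apply: Hny.
  have [k2 [s2 [y2 [Hk2 Hs2 Hy2 E2]]]] := eilenberg_zilber_exists z t.
  have Ek := eilenberg_zilber_dim Hs Hs2 Hy Hy2 (esym (etrans E2 Ez)).
  left; exists k, (hid k), y; rewrite act_id; split => //.
  by rewrite Ek; exact: leq_ltn_trans Hk2 Hk0.
have [d [Hd _]] := surj_hom_section_at ord0 Hs.
by right; rewrite -(act_section y Hd); apply: L_act.
Qed.

Definition rlift_succ : relskel_lift r.+1.
Proof.
refine (@RelSkelLift r.+1 rlift_succ_fn _ _ _).
- move=> m m' f x h h'.
  have [Hx | Hx] := classic (in_relskel r x).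
    rewrite (rlift_succ_fn_prev h Hx) (rlift_succ_fn_prev h' (relskel_act f Hx)).
    exact: rlift_nat.
  case: (ez_decomp x) => k s y Hs Hy Ex.
  have Hny : ~ in_relskel r y by move=> Hy'; apply: Hx; rewrite -Ex; apply: relskel_act.
  have hk := relskel_succ_dim Hs Hy Ex h Hx.
  rewrite (rlift_succ_fn_act hk h Hy Hny Ex).
  have Efx : act (hcomp s f) y = act f x by rewrite act_comp Ex.
  by rewrite (rlift_succ_fn_act hk h' Hy Hny Efx) act_comp.
- move=> m x h.
  have [Hx | Hx] := classic (in_relskel r x).
    by rewrite rlift_succ_fn_prev rlift_over.
  case: (ez_decomp x) => k s y Hs Hy Ex.
  have hk := relskel_succ_dim Hs Hy Ex h Hx.
  by rewrite (rlift_succ_fn_new h hk Hx Hs Hy Ex) fn_nat fill_over -fn_nat Ex.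
- by move=> m x hL h; rewrite (rlift_succ_fn_prev h (or_intror hL)) rlift_ext.
Defined.

End Succ.

Fixpoint rlift_stage r : relskel_lift r :=
  if r is r'.+1 then rlift_succ (rlift_stage r') else rlift0.

Lemma rlift_stage_mono r s m (x : K m) (h : in_relskel s x) (h' : in_relskel r x) :
  r <= s -> rlift (rlift_stage s) h = rlift (rlift_stage r) h'.
Proof.
elim: s h => [|s IH] h Hrs.
  by move: Hrs; rewrite leqn0 => /eqP Er; subst r; apply: rlift_eq.
have [Hr | Hr] := leqP r s.
  by rewrite /= (rlift_succ_fn_prev (rlift_stage s) h (relskel_mono Hr h')) IH.
have Er : r = s.+1 by apply/eqP; rewrite eqn_leq Hrs Hr.
by subst r; apply: rlift_eq.
Qed.

Definition rel_lift_fn m (x : K m) : E m := rlift (rlift_stage m.+1) (relskel_self x).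

Lemma rel_lift_nat m m' (f : hom m' m) (x : K m) :
  rel_lift_fn (act f x) = act f (rel_lift_fn x).
Proof.
have L1 : m'.+1 <= (m + m').+1 by rewrite ltnS leq_addl.
have L2 : m.+1 <= (m + m').+1 by rewrite ltnS leq_addr.
have H1 := relskel_mono L1 (relskel_self (act f x)).
have H2 := relskel_mono L2 (relskel_self x).
rewrite /rel_lift_fn -(rlift_stage_mono H1 (relskel_self (act f x)) L1).
by rewrite (rlift_nat _ H2) (rlift_stage_mono H2 (relskel_self x) L2).
Qed.

Lemma trivial_fibration_rel_lift : exists l : sMap K E,
  (forall m (x : K m) (h : L x), fn l x = a x h) /\
  (forall m (x : K m), fn p (fn l x) = fn b x).
Proof.
exists (@SMap K E rel_lift_fn (fun m n f x => rel_lift_nat f x)).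
by split => m x; rewrite /= /rel_lift_fn ?rlift_over // => h; rewrite rlift_ext.
Qed.

End RelativeSkeletalLift.

(** * Filling left horns against Kan fibrations *)

Lemma enum_set_sorted n (S : {set 'I_n.+1}) : sorted (fun a b : 'I_n.+1 => a < b) (enum S).
Proof.
rewrite /enum_mem -enumT; apply: sorted_filter; first by move=> a b c; apply: ltn_trans.
by have := iota_ltn_sorted 0 n.+1; rewrite -val_enum_ord sorted_map.
Qed.

Section EnumHom.
Variables (n r : nat) (T : {set 'I_n.+1}).

(* The increasing enumeration of [T], meaningful only when [#|T| = r.+2];
   otherwise the constant map, so that it is monotone in all cases. *)
Definition enum_fn (i : 'I_r.+2) : 'I_n.+1 :=
  if #|T| == r.+2 then nth ord0 (enum T) i else ord0.

Lemma enum_fn_strict : #|T| = r.+2 -> forall i j : 'I_r.+2, i < j -> enum_fn i < enum_fn j.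
Proof.
move=> hT i j Hij; rewrite /enum_fn hT eqxx.
apply: (sorted_ltn_nth _ _ (enum_set_sorted T)) => //; first exact: ltn_trans.
  by rewrite inE -cardE hT.
by rewrite inE -cardE hT.
Qed.

Lemma enum_fn_mono (i j : 'I_r.+2) : i <= j -> enum_fn i <= enum_fn j.
Proof.
have [hT | hT] := eqVneq #|T| r.+2; last by rewrite /enum_fn (negbTE hT).
rewrite leq_eqVlt => /orP [/eqP/val_inj -> // | Hij].
exact: ltnW (enum_fn_strict hT Hij).
Qed.

Definition enum_hom : hom r.+1 n := mk_hom enum_fn_mono.

Hypothesis hT : #|T| = r.+2.

Lemma enum_hom_in i : hfun enum_hom i \in T.
Proof. by rewrite mk_homE /enum_fn hT eqxx -mem_enum mem_nth // -cardE hT. Qed.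

Lemma enum_hom_leq i j : (hfun enum_hom i <= hfun enum_hom j) = (i <= j).
Proof.
rewrite !mk_homE; apply/idP/idP; last exact: enum_fn_mono.
by apply: contraTT; rewrite -!ltnNge; apply: enum_fn_strict.
Qed.

Lemma enum_hom_inj : injective (hfun enum_hom).
Proof.
move=> i j E; apply: val_inj; apply/eqP.
by rewrite eqn_leq -!enum_hom_leq E !leqnn.
Qed.

Lemma enum_hom_index t : t \in T -> index t (enum T) < r.+2.
Proof. by rewrite -hT cardE index_mem mem_enum. Qed.

Lemma enum_hom_onto t : t \in T -> exists i, hfun enum_hom i = t.
Proof.
move=> Ht; exists (Ordinal (enum_hom_index Ht)).
by rewrite mk_homE /enum_fn hT eqxx /= nth_index // mem_enum.
Qed.

Lemma enum_hom0 : ord0 \in T -> hfun enum_hom ord0 = ord0.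
Proof.
move=> /enum_hom_onto [i Hi]; apply: val_inj; apply/eqP; rewrite -leqn0.
by rewrite -[X in _ <= X]/(nat_of_ord (@ord0 n)) -Hi enum_hom_leq.
Qed.

Section Factor.
Variables (j : nat) (phi : hom j n).
Hypothesis phi_in : forall i, hfun phi i \in T.

Definition enum_factor_fn (i : 'I_j.+1) : 'I_r.+2 := inord (index (hfun phi i) (enum T)).

Lemma enum_factor_fnK i : hfun enum_hom (enum_factor_fn i) = hfun phi i.
Proof.
rewrite mk_homE /enum_fn hT eqxx /enum_factor_fn inordK ?enum_hom_index //.
by rewrite nth_index // mem_enum.
Qed.

Lemma enum_factor_fn_mono (a b : 'I_j.+1) : a <= b -> enum_factor_fn a <= enum_factor_fn b.
Proof. by move=> Hab; rewrite -enum_hom_leq !enum_factor_fnK hom_mono. Qed.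

Definition enum_factor : hom j r.+1 := mk_hom enum_factor_fn_mono.

Lemma enum_factorK : hcomp enum_hom enum_factor = phi.
Proof.
by apply: hom_eq => i; rewrite hcompE [hfun enum_factor _]mk_homE enum_factor_fnK.
Qed.

End Factor.
End EnumHom.

Definition vertex0 n : hom 0 n := @mk_hom 0 n (fun _ => ord0) (fun _ _ _ => leqnn 0).

Definition span0 n j (phi : hom j n) : {set 'I_n.+1} :=
  ord0 |: [set hfun phi i | i : 'I_j.+1].

Definition span0_le r n j (phi : hom j n) : bool := #|span0 phi| <= r.+1.

Lemma span0_0 n j (phi : hom j n) : ord0 \in span0 phi.
Proof. by rewrite !inE eqxx. Qed.

Lemma span0_im n j (phi : hom j n) i : hfun phi i \in span0 phi.
Proof. by rewrite !inE imset_f ?orbT. Qed.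

Lemma span0_comp n j j' (phi : hom j n) (psi : hom j' j) :
  span0 (hcomp phi psi) \subset span0 phi.
Proof.
apply/subsetP => t; rewrite in_setU1 => /orP [/eqP -> | /imsetP [i _ ->]].
  exact: span0_0.
by rewrite hcompE span0_im.
Qed.

Lemma span0_le_comp r n j j' (phi : hom j n) (psi : hom j' j) :
  span0_le r phi -> span0_le r (hcomp phi psi).
Proof. by apply: leq_trans; apply/subset_leq_card/span0_comp. Qed.

Lemma span0_le0_const n j (phi : hom j n) : span0_le 0 phi -> forall i, hfun phi i = ord0.
Proof.
move=> H i; apply/eqP; apply: contraTT H => Hne.
have : [set ord0; hfun phi i] \subset span0 phi.
  by apply/subsetP => t /set2P [->|->]; [exact: span0_0 | exact: span0_im].
by move/subset_leq_card; rewrite cards2 eq_sym Hne -ltnNge.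
Qed.

Lemma span0_le_max n j (phi : hom j n) : span0_le n phi.
Proof. by rewrite /span0_le (leq_trans (max_card _)) ?card_ord. Qed.

Lemma span0_le_vertex0 r n : span0_le r (vertex0 n).
Proof.
rewrite /span0_le (leq_trans _ (_ : 1 <= r.+1)) // -(cards1 (@ord0 n)) subset_leq_card //.
by apply/subsetP => t; rewrite !inE => /orP [// | /imsetP [i _ ->]]; rewrite mk_homE.
Qed.

Lemma span0_card r n j (phi : hom j n) :
  span0_le r.+1 phi -> ~~ span0_le r phi -> #|span0 phi| = r.+2.
Proof. by rewrite /span0_le -ltnNge => H1 H2; apply/eqP; rewrite eqn_leq H1. Qed.

Section EnumSpan.
Variables (n r : nat) (T : {set 'I_n.+1}).
Hypotheses (hT : #|T| = r.+2) (h0 : ord0 \in T).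

Lemma span0_enum_hom_sub j (g : hom j r.+1) : span0 (hcomp (enum_hom r T) g) \subset T.
Proof.
apply/subsetP => t; rewrite in_setU1 => /orP [/eqP -> // | /imsetP [i _ ->]].
by rewrite hcompE enum_hom_in.
Qed.

Lemma enum_factor_unique j (g : hom j r.+1) (phi : hom j n)
    (phi_in : forall i, hfun phi i \in T) :
  hcomp (enum_hom r T) g = phi -> enum_factor hT phi_in = g.
Proof.
move=> Eg; apply: hom_eq => i; apply: (enum_hom_inj hT).
by rewrite -hcompE enum_factorK -Eg hcompE.
Qed.

(* The vertex [i] of [[r+1]] sent outside [span0 (enum_hom ∘ g)] is not hit
   by [g], and is not [0] because [enum_hom] preserves [0]. *)
Lemma hornb_of_span0 j (g : hom j r.+1) :
  ~~ (T \subset span0 (hcomp (enum_hom r T) g)) -> hornb ord0 g.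
Proof.
case/subsetPn => t Ht Htn; have [i Hi] := enum_hom_onto hT Ht.
apply/existsP; exists i; apply/andP; split.
  by apply: contraNneq Htn => Ei; rewrite -Hi Ei enum_hom0 // span0_0.
apply/forallP => x; apply: contraNneq Htn => Ex.
by rewrite -Hi -Ex -hcompE span0_im.
Qed.

Lemma span0_le_horn j (g : hom j r.+1) :
  hornb ord0 g -> span0_le r (hcomp (enum_hom r T) g).
Proof.
case/existsP => i /andP [Hi0 /forallP Hg].
set t := hfun (enum_hom r T) i.
have Hsub : span0 (hcomp (enum_hom r T) g) \subset T :\ t.
  apply/subsetP => u; rewrite in_setU1 => /orP [/eqP -> | /imsetP [x _ ->]].
    rewrite !inE h0 andbT; apply: contra Hi0 => /eqP Et.
    by apply/eqP/(enum_hom_inj hT); rewrite enum_hom0 // Et.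
  rewrite !inE hcompE enum_hom_in // andbT.
  by apply: contra (Hg x) => /eqP/(enum_hom_inj hT) ->.
rewrite /span0_le (leq_trans (subset_leq_card Hsub)) //.
by move: hT; rewrite (cardsD1 t) enum_hom_in // add1n => -[->].
Qed.

End EnumSpan.

Section KanVertexLift.
Variables (E B : sSet) (q : sMap E B).
Hypothesis q_kan : kan_fibration q.
Variables (n : nat) (b : sMap (Delta n) B) (e : E 0).
Hypothesis e_over : fn q e = fn b (vertex0 n).

Record vertex_lift_stage r := VertexLiftStage {
  vlift : forall j (phi : hom j n), span0_le r phi -> E j;
  vlift_nat : forall j j' (psi : hom j' j) (phi : hom j n)
      (h : span0_le r phi) (h' : span0_le r (hcomp phi psi)),
    vlift h' = act psi (vlift h);
  vlift_over : forall j (phi : hom j n) (h : span0_le r phi), fn q (vlift h) = fn b phi;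
  vlift_vertex0 : forall h : span0_le r (vertex0 n), vlift h = e }.

Lemma vlift_eq r (P : vertex_lift_stage r) j (phi phi' : hom j n)
    (h : span0_le r phi) (h' : span0_le r phi') :
  phi = phi' -> vlift P h = vlift P h'.
Proof. by move=> E0; subst phi'; rewrite (bool_irrelevance h h'). Qed.

Definition vlift0 : vertex_lift_stage 0.
Proof.
refine (@VertexLiftStage 0 (fun j phi h => act (hconst j) e) _ _ _).
- move=> j j' psi phi h h'.
  by rewrite -act_comp (hom_to0_eq (hconst j') (hcomp (hconst j) psi)).
- move=> j phi h; rewrite fn_nat e_over -fn_nat /=; congr (fn b _).
  by apply: hom_eq => i; rewrite hcompE mk_homE (span0_le0_const h).
- by move=> h; rewrite (hom_to0_eq (hconst 0) (hid 0)) act_id.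
Defined.

Section Succ.
Variables (r : nat) (P : vertex_lift_stage r).

Section HornFill.
Variables (T : {set 'I_n.+1}) (hT : #|T| = r.+2) (h0 : ord0 \in T).

Definition horn_vlift : sMap (Horn (@ord0 r.+1)) E.
Proof.
refine (@SMap (Horn (@ord0 r.+1)) E
          (fun j g => vlift P (span0_le_horn hT h0 (svalP g))) _).
move=> j j' f [g Hg] /=.
rewrite -(vlift_nat P _ (span0_le_comp f (span0_le_horn hT h0 Hg))).
by apply: vlift_eq; rewrite hcompA.
Defined.

Lemma horn_vlift_over j (x : Horn (@ord0 r.+1) j) :
  fn q (fn horn_vlift x) = fn (sComp b (Dmap (enum_hom r T))) (fn (horn_incl ord0) x).
Proof. by rewrite /= vlift_over. Qed.

Definition horn_fill : sMap (Delta r.+1) E :=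
  proj1_sig (constructive_indefinite_description _ (q_kan horn_vlift_over)).

Lemma horn_fill_horn j (g : hom j r.+1) (hg : hornb ord0 g) :
  fn horn_fill g = vlift P (span0_le_horn hT h0 hg).
Proof.
rewrite /horn_fill; case: (constructive_indefinite_description _ _) => l [Hl _] /=.
by rewrite (Hl j (exist _ g hg)); apply: vlift_eq.
Qed.

Lemma horn_fill_over j (g : hom j r.+1) :
  fn q (fn horn_fill g) = fn b (hcomp (enum_hom r T) g).
Proof.
by rewrite /horn_fill; case: (constructive_indefinite_description _ _) => l [_ ->].
Qed.

End HornFill.

(* A simplex [phi] whose span [T] with [0] has [r.+2] vertices is
   [enum_hom T ∘ g] for a unique [g]; it is lifted to the [g]-face of the filler
   of the horn [Λ^0[r.+1]] of [T], on which the previous stage is defined. *)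
Definition vlift_succ_fn j (phi : hom j n) (h : span0_le r.+1 phi) : E j :=
  match @idP (span0_le r phi) with
  | ReflectT h0 => vlift P h0
  | ReflectF hn =>
      let hT := span0_card h (introT negP hn) in
      fn (horn_fill hT (span0_0 phi)) (enum_factor hT (@span0_im n j phi))
  end.

Lemma vlift_succ_fn_prev j (phi : hom j n) (h : span0_le r.+1 phi) (h0 : span0_le r phi) :
  vlift_succ_fn h = vlift P h0.
Proof.
rewrite /vlift_succ_fn; case: {-}_ / idP => [h1 | //].
by rewrite (bool_irrelevance h1 h0).
Qed.

Lemma vlift_succ_fn_fill (T : {set 'I_n.+1}) (hT : #|T| = r.+2) (h0 : ord0 \in T)
    j (g : hom j r.+1) (phi : hom j n) (h : span0_le r.+1 phi) :
  hcomp (enum_hom r T) g = phi -> vlift_succ_fn h = fn (horn_fill hT h0) g.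
Proof.
move=> Eg; have [Hc | Hc] := boolP (span0_le r phi).
  have Hg : hornb ord0 g.
    apply: (hornb_of_span0 hT h0); apply/negP => /subset_leq_card.
    by rewrite hT Eg => /leq_trans /(_ Hc); rewrite ltnn.
  rewrite (vlift_succ_fn_prev h Hc) (horn_fill_horn hT h0 Hg).
  exact: vlift_eq.
have ES : span0 phi = T.
  apply/eqP; rewrite eqEcard hT (span0_card h Hc) leqnn andbT -Eg.
  exact: span0_enum_hom_sub.
subst T; rewrite /vlift_succ_fn; case: {-}_ / idP => [h1 | hn]; first by rewrite h1 in Hc.
rewrite (bool_irrelevance (span0_0 phi) h0).
rewrite (eq_irrelevance (span0_card h (introT negP hn)) hT).
by rewrite (enum_factor_unique hT _ Eg).
Qed.

Definition vlift_succ : vertex_lift_stage r.+1.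
Proof.
refine (@VertexLiftStage r.+1 vlift_succ_fn _ _ _).
- move=> j j' psi phi h h'.
  have [Hc | Hc] := boolP (span0_le r phi).
    rewrite (vlift_succ_fn_prev h Hc) (vlift_succ_fn_prev h' (span0_le_comp psi Hc)).
    exact: vlift_nat.
  have hT := span0_card h Hc.
  have Eg := enum_factorK hT (@span0_im n j phi).
  rewrite (vlift_succ_fn_fill hT (span0_0 phi) h Eg) -fn_nat.
  by apply: vlift_succ_fn_fill; rewrite hcompA Eg.
- move=> j phi h.
  have [Hc | Hc] := boolP (span0_le r phi).
    by rewrite (vlift_succ_fn_prev h Hc) vlift_over.
  have hT := span0_card h Hc.
  have Eg := enum_factorK hT (@span0_im n j phi).
  by rewrite (vlift_succ_fn_fill hT (span0_0 phi) h Eg) horn_fill_over Eg.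
- by move=> h; rewrite (vlift_succ_fn_prev h (span0_le_vertex0 r n)) vlift_vertex0.
Defined.

End Succ.

Fixpoint vlift_stage r : vertex_lift_stage r :=
  if r is r'.+1 then vlift_succ (vlift_stage r') else vlift0.

Lemma kan_fibration_vertex_lift : exists y : sMap (Delta n) E,
  (forall j (phi : Delta n j), fn q (fn y phi) = fn b phi) /\ fn y (vertex0 n) = e.
Proof.
pose yf j (phi : hom j n) := vlift (vlift_stage n) (span0_le_max phi).
have yf_nat j j' (f : hom j j') (phi : hom j' n) : yf j (hcomp phi f) = act f (yf j' phi).
  exact: vlift_nat.
exists (@SMap (Delta n) E yf yf_nat).
by split => [j phi|]; rewrite /= /yf ?vlift_over ?vlift_vertex0.
Qed.

End KanVertexLift.

(** * Rows of a v-fibrant bisimplicial set *)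

Definition row0_proj (X : bsSet) n : sMap (row X n) (row X 0).
Proof.
refine (@SMap (row X n) (row X 0) (fun m x => bact (hid m) (vertex0 n) x) _).
by move=> m m' f x /=; rewrite -!bact_comp !hcomp_id_l !hcomp_id_r.
Defined.

Section RowProjection.
Variables (X : bsSet) (n m : nat).
Variables (a : sMap (Bdry m) (row X n)) (b : sMap (Delta m) (row X 0)).
Hypothesis ab :
  forall j (x : Bdry m j), fn (row0_proj X n) (fn a x) = fn b (fn (bdry_incl m) x).

(* The transposes of [a] and [b]: a lifting problem for [vertex0] against
   [Δ[m]\X -> ∂Δ[m]\X]. *)
Definition transpose_bdry_fn j (phi : hom j n) : bMap (box (Bdry m) (Delta j)) X.
Proof.
refine (@BMap (box (Bdry m) (Delta j)) X
          (fun k j' x => bact (hid k) (hcomp phi x.2) (fn a x.1)) _).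
move=> k k' j1 j1' f g [y psi] /=.
by rewrite fn_nat /= -!bact_comp !hcomp_id_l !hcomp_id_r hcompA.
Defined.

Definition transpose_bdry : sMap (Delta n) (Under (Bdry m) X).
Proof.
refine (@SMap (Delta n) (Under (Bdry m) X) transpose_bdry_fn _).
by move=> j j' f phi; apply: bMap_eq => k j1 [y psi] /=; rewrite hcompA.
Defined.

Definition transpose_delta : Under (Delta m) X 0.
Proof.
refine (@BMap (box (Delta m) (Delta 0)) X
          (fun k j' x => bact (hid k) x.2 (fn b x.1)) _).
move=> k k' j1 j1' f g [y psi] /=.
by rewrite fn_nat /= -!bact_comp !hcomp_id_l !hcomp_id_r.
Defined.

Lemma transpose_delta_over :
  fn (Under_map (bdry_incl m) X) transpose_delta = fn transpose_bdry (vertex0 n).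
Proof.
apply: bMap_eq => k j1 [y psi] /=.
by rewrite -(ab y) /= -bact_comp !hcomp_id_l.
Qed.

Lemma row0_proj_lift : vfibrant X -> exists l : sMap (Delta m) (row X n),
  (forall j (x : Bdry m j), fn l (fn (bdry_incl m) x) = fn a x) /\
  (forall j (x : Delta m j), fn (row0_proj X n) (fn l x) = fn b x).
Proof.
move=> HX; have [y [y_over y0]] := kan_fibration_vertex_lift (HX m) transpose_delta_over.
pose Y := fn y (hid n).
pose lf k (g : hom k m) : X k n := bfn Y (g, hid n).
have lf_nat k k' (f : hom k k') (g : hom k' m) :
    lf k (hcomp g f) = bact f (hid n) (lf k' g).
  by rewrite /lf -bfn_nat /= hcomp_id_l.
exists (@SMap (Delta m) (row X n) lf lf_nat); split.
- move=> j [g Hg] /=; rewrite /lf.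
  have /(congr1 (fun G : bMap (box (Bdry m) (Delta n)) X =>
                     bfn G ((exist _ g Hg : Bdry m j), hid n))) /= := y_over n (hid n).
  by rewrite /Y => ->; rewrite hcomp_id_l bact_id.
- move=> j g /=; rewrite /lf -bfn_nat /= hcomp_id_l hcomp_id_r.
  have E1 : fn y (vertex0 n) = act (vertex0 n) Y by rewrite /Y -fn_nat /= hcomp_id_l.
  have /(congr1 (fun G : bMap (box (Delta m) (Delta 0)) X =>
                     bfn G ((g : Delta m j), hid 0))) := E1.
  by rewrite y0 /= hcomp_id_r bact_id => <-.
Qed.

End RowProjection.

Lemma row0_proj_trivial_fibration (X : bsSet) n :
  vfibrant X -> trivial_fibration (row0_proj X n).
Proof. by move=> HX m a b ab; apply: row0_proj_lift. Qed.

(** * Isomorphisms in the fundamental category *)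

Section Tau1Functor.
Variables (S T : sSet) (F : sMap S T).

Lemma esrc_map e : esrc (fn F e) = fn F (esrc e).
Proof. by rewrite /esrc fn_nat. Qed.

Lemma etgt_map e : etgt (fn F e) = fn F (etgt e).
Proof. by rewrite /etgt fn_nat. Qed.

Lemma is_chain_map x p y : is_chain x p y -> is_chain (fn F x) (map (fn F) p) (fn F y).
Proof.
elim: p x => [|e p IH] x /=; first by move=> ->.
by case=> <- Hp; rewrite esrc_map etgt_map; split => //; apply: IH.
Qed.

Lemma hstep_map p p' : hstep p p' -> hstep (map (fn F) p) (map (fn F) p').
Proof.
case=> [a b v | a b t]; rewrite !map_cat /=.
  by rewrite /edeg fn_nat; apply: hstep_deg.
by rewrite /tface !fn_nat; apply: hstep_tri.
Qed.

Lemma hequiv_map x y p p' : hequiv x y p p' ->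
  hequiv (fn F x) (fn F y) (map (fn F) p) (map (fn F) p').
Proof.
elim=> [a b [H1 H2 H3] | a | a b _ IH | a b c _ IH1 _ IH2].
- by apply: rst_step; split; [apply: is_chain_map | apply: is_chain_map | apply: hstep_map].
- exact: rst_refl.
- exact: rst_sym.
- exact: rst_trans IH1 IH2.
Qed.

Lemma tau1_iso_map x y : tau1_iso x y -> tau1_iso (fn F x) (fn F y).
Proof.
case=> p [q [Hp Hq Hpq Hqp]].
exists (map (fn F) p), (map (fn F) q).
split; try exact: is_chain_map; rewrite -map_cat.
  exact: hequiv_map Hpq.
exact: hequiv_map Hqp.
Qed.

End Tau1Functor.

Section Tau1Iso.
Variable S : sSet.

Lemma is_chain_cat (x y z : S 0) p q :
  is_chain x p y -> is_chain y q z -> is_chain x (p ++ q) z.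
Proof.
elim: p x => [|e p IH] x /=; first by move=> ->.
by case=> Hx Hp Hq; split => //; apply: IH.
Qed.

Lemma hstep_ctx (p q r r' : seq (S 1)) :
  hstep r r' -> hstep (p ++ r ++ q) (p ++ r' ++ q).
Proof.
case=> [a b v | a b t]; rewrite !catA -!(catA _ _ q) /=.
  exact: hstep_deg.
exact: hstep_tri.
Qed.

Lemma hequiv_ctx (x a b y : S 0) p q r r' :
  is_chain x p a -> is_chain b q y -> hequiv a b r r' ->
  hequiv x y (p ++ r ++ q) (p ++ r' ++ q).
Proof.
move=> Hp Hq; elim=> [r1 r2 [H1 H2 H3] | r1 | r1 r2 _ IH | r1 r2 r3 _ IH1 _ IH2].
- apply: rst_step; split; last exact: hstep_ctx.
    by apply: (is_chain_cat Hp); apply: is_chain_cat H1 Hq.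
  by apply: (is_chain_cat Hp); apply: is_chain_cat H2 Hq.
- exact: rst_refl.
- exact: rst_sym.
- exact: rst_trans IH1 IH2.
Qed.

Lemma tau1_iso_sym (x y : S 0) : tau1_iso x y -> tau1_iso y x.
Proof. by case=> p [q [Hp Hq Hpq Hqp]]; exists q, p. Qed.

Lemma tau1_iso_trans (x y z : S 0) : tau1_iso x y -> tau1_iso y z -> tau1_iso x z.
Proof.
case=> p [q [Hp Hq Hpq Hqp]] [p' [q' [Hp' Hq' Hpq' Hqp']]].
exists (p ++ p'), (q' ++ q); split.
- exact: is_chain_cat Hp Hp'.
- exact: is_chain_cat Hq' Hq.
- rewrite -catA (catA p'); exact: rst_trans (hequiv_ctx Hp Hq Hpq') Hpq.
- rewrite -catA (catA q); exact: rst_trans (hequiv_ctx Hq' Hp' Hqp) Hqp'.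
Qed.

Lemma esrc_edeg (v : S 0) : esrc (edeg v) = v.
Proof. by rewrite /esrc /edeg -act_comp (hom_to0_eq (hcomp _ _) (hid 0)) act_id. Qed.

Lemma etgt_edeg (v : S 0) : etgt (edeg v) = v.
Proof. by rewrite /etgt /edeg -act_comp (hom_to0_eq (hcomp _ _) (hid 0)) act_id. Qed.

Lemma hequiv_triangle_id (x : S 0) (t : S 2) :
  is_chain x [:: tface 2 t; tface 0 t] x -> tface 1 t = edeg x ->
  hequiv x x [:: tface 2 t; tface 0 t] [::].
Proof.
move=> Ht Et.
have Hd : is_chain x [:: edeg x] x by rewrite /= esrc_edeg etgt_edeg.
apply: (@rst_trans _ _ _ [:: edeg x]); apply: rst_step; split => //.
  by rewrite -Et; exact: (hstep_tri [::] [::] t).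
exact: (hstep_deg [::] [::] x).
Qed.

End Tau1Iso.

(** * Homotopies and weak categorical equivalences *)

Definition precomp (A B Z : sSet) (u : sMap A B) : sMap (FunS B Z) (FunS A Z).
Proof.
refine (@SMap (FunS B Z) (FunS A Z) (fun n h => sComp h (prodmap u (sId (Delta n)))) _).
by move=> m n f h; apply: sMap_eq => k [x y].
Defined.

Definition precomp0 (A B Z : sSet) (u : sMap A B) (h : FunS B Z 0) : FunS A Z 0 :=
  fn (precomp Z u) h.

Lemma tau1_iso_precomp0 (A B Z : sSet) (u : sMap A B) (h1 h2 : FunS B Z 0) :
  tau1_iso h1 h2 -> tau1_iso (precomp0 u h1) (precomp0 u h2).
Proof. exact: tau1_iso_map. Qed.

Lemma precomp0_comp (A B C Z : sSet) (u : sMap A B) (v : sMap B C) (h : FunS C Z 0) :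
  precomp0 (sComp v u) h = precomp0 u (precomp0 v h).
Proof. by apply: sMap_eq => k [x y]. Qed.

Lemma precomp0_id (A Z : sSet) (u : sMap A A) (h : FunS A Z 0) :
  (forall m (x : A m), fn u x = x) -> precomp0 u h = h.
Proof. by move=> Hu; apply: sMap_eq => k [x y] /=; rewrite Hu. Qed.

(* The nerve of the contractible groupoid on [{0, 1}]: its [m]-simplices are
   all maps [[m] -> bool], so its edge [0 -> 1] is invertible. *)
Definition sJ : sSet.
Proof.
refine (@SSet (fun m => {ffun 'I_m.+1 -> bool})
          (fun m n f c => [ffun i => c (hfun f i)]) _ _).
- by move=> n c; apply/ffunP => i; rewrite !ffunE hidE.
- by move=> m n p f g c; apply/ffunP => i; rewrite !ffunE hcompE.
Defined.

Section Homotopy.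
Variables (A Z : sSet) (H : sMap (sProd A sJ) A) (r : sMap A A).
Hypothesis H0 : forall m (x : A m), fn H ((x, [ffun _ => false]) : sProd A sJ m) = x.
Hypothesis H1 : forall m (x : A m), fn H ((x, [ffun _ => true]) : sProd A sJ m) = fn r x.
Variable g : FunS A Z 0.

(* The restriction of [g ∘ H] to [A × c], for [c] an [N]-simplex of [J]. *)
Definition hsimplex_fn N (c : 'I_N.+1 -> bool) k (x : sProd A (Delta N) k) : Z k :=
  fn g ((fn H ((x.1, [ffun i => c (hfun x.2 i)]) : sProd A sJ k), hconst k)
        : sProd A (Delta 0) k).

Lemma hsimplex_fn_nat N (c : 'I_N.+1 -> bool) k k' (f : hom k k')
    (x : sProd A (Delta N) k') :
  hsimplex_fn c (act f x) = act f (hsimplex_fn c x).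
Proof.
case: x => x psi; rewrite /hsimplex_fn -fn_nat /= -fn_nat /=.
congr (fn g (fn H (_, _), _)); last exact: hom_to0_eq.
by apply/ffunP => i; rewrite !ffunE hcompE.
Qed.

Definition hsimplex N c : FunS A Z N := SMap (@hsimplex_fn_nat N c).

Lemma hsimplex_ext N (c c' : 'I_N.+1 -> bool) : c =1 c' -> hsimplex c = hsimplex c'.
Proof.
move=> Ec; apply: sMap_eq => k [x psi] /=; rewrite /hsimplex_fn /=.
by congr (fn g (fn H (_, _), _)); apply/ffunP => i; rewrite !ffunE Ec.
Qed.

Lemma act_hsimplex N N' (psi : hom N' N) c :
  act psi (hsimplex c) = hsimplex (fun i => c (hfun psi i)).
Proof.
apply: sMap_eq => k [x phi] /=; rewrite /hsimplex_fn /=.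
by congr (fn g (fn H (_, _), _)); apply/ffunP => i; rewrite !ffunE hcompE.
Qed.

Lemma hsimplex_false : hsimplex (fun _ : 'I_1 => false) = g.
Proof.
apply: sMap_eq => k [x psi] /=; rewrite /hsimplex_fn /=.
by rewrite H0 (hom_to0_eq psi (hconst k)).
Qed.

Lemma hsimplex_true : hsimplex (fun _ : 'I_1 => true) = precomp0 r g.
Proof.
apply: sMap_eq => k [x psi] /=; rewrite /hsimplex_fn /=.
by rewrite H1 (hom_to0_eq psi (hconst k)).
Qed.

Definition hedge01 := hsimplex (fun i : 'I_2 => val i == 1).
Definition hedge10 := hsimplex (fun i : 'I_2 => val i == 0).
Definition htriangle010 := hsimplex (fun i : 'I_3 => val i == 1).
Definition htriangle101 := hsimplex (fun i : 'I_3 => val i != 1).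

Local Ltac ord_cases := move=> [[|[|[|]]] ?] //=; rewrite ?mk_homE /= /bump ?inordK.

Lemma hedge01_ends : esrc hedge01 = g /\ etgt hedge01 = precomp0 r g.
Proof.
rewrite /esrc /etgt /hedge01 !act_hsimplex -hsimplex_true -hsimplex_false.
by split; apply: hsimplex_ext; ord_cases.
Qed.

Lemma hedge10_ends : esrc hedge10 = precomp0 r g /\ etgt hedge10 = g.
Proof.
rewrite /esrc /etgt /hedge10 !act_hsimplex -hsimplex_true -hsimplex_false.
by split; apply: hsimplex_ext; ord_cases.
Qed.

Lemma htriangle010_faces :
  [/\ tface 2 htriangle010 = hedge01, tface 0 htriangle010 = hedge10
    & tface 1 htriangle010 = edeg g].
Proof.
rewrite -hsimplex_false /tface /edeg /htriangle010 /hedge01 /hedge10 !act_hsimplex.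
by split; apply: hsimplex_ext; ord_cases.
Qed.

Lemma htriangle101_faces :
  [/\ tface 2 htriangle101 = hedge10, tface 0 htriangle101 = hedge01
    & tface 1 htriangle101 = edeg (precomp0 r g)].
Proof.
rewrite -hsimplex_true /tface /edeg /htriangle101 /hedge01 /hedge10 !act_hsimplex.
by split; apply: hsimplex_ext; ord_cases.
Qed.

Lemma homotopy_tau1_iso : tau1_iso (precomp0 r g) g.
Proof.
have [s01 t01] := hedge01_ends; have [s10 t10] := hedge10_ends.
have [A2 A0 A1] := htriangle010_faces; have [B2 B0 B1] := htriangle101_faces.
exists [:: hedge10], [:: hedge01]; rewrite !cat1s; split => //.
- rewrite -B2 -B0; apply: hequiv_triangle_id => //.
  by rewrite B2 B0; split => //; split; rewrite ?s01 ?t10.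
- rewrite -A2 -A0; apply: hequiv_triangle_id => //.
  by rewrite A2 A0; split => //; split; rewrite ?s10 ?t01.
Qed.

End Homotopy.

(* [wce u] unfolds to [forall Z, quasi_category Z -> tau0_bij u Z]. *)
Definition tau0_bij (A B : sSet) (u : sMap A B) (Z : sSet) : Prop :=
  (forall g : FunS A Z 0, exists h : FunS B Z 0, tau1_iso (precomp0 u h) g) /\
  (forall h1 h2 : FunS B Z 0,
     tau1_iso (precomp0 u h1) (precomp0 u h2) -> tau1_iso h1 h2).

Section Tau0Bij.
Variables (A B C Z : sSet) (u : sMap A B) (v : sMap B C).

Lemma tau0_bij_comp : tau0_bij u Z -> tau0_bij v Z -> tau0_bij (sComp v u) Z.
Proof.
move=> [Su Iu] [Sv Iv]; split.
- move=> g; have [h Hh] := Su g; have [k Hk] := Sv h.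
  by exists k; rewrite precomp0_comp; apply: tau1_iso_trans Hh; apply: tau1_iso_precomp0.
- by move=> k1 k2; rewrite !precomp0_comp => /Iu /Iv.
Qed.

Lemma tau0_bij_cancel : tau0_bij v Z -> tau0_bij (sComp v u) Z -> tau0_bij u Z.
Proof.
move=> [Sv Iv] [Svu Ivu]; split.
- by move=> g; have [k Hk] := Svu g; exists (precomp0 v k); rewrite -precomp0_comp.
- move=> h1 h2 H12; have [k1 Hk1] := Sv h1; have [k2 Hk2] := Sv h2.
  have /Ivu Hk : tau1_iso (precomp0 (sComp v u) k1) (precomp0 (sComp v u) k2).
    rewrite !precomp0_comp; apply: tau1_iso_trans (tau1_iso_precomp0 u Hk1) _.
    exact: tau1_iso_trans H12 (tau1_iso_sym (tau1_iso_precomp0 u Hk2)).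
  apply: tau1_iso_trans (tau1_iso_sym Hk1) _.
  exact: tau1_iso_trans (tau1_iso_precomp0 v Hk) Hk2.
Qed.

End Tau0Bij.

Lemma tau0_bij_transfer (A B C D Z : sSet) (f : sMap A B) (g : sMap B D)
    (f' : sMap A C) (g' : sMap C D) :
  sComp g f = sComp g' f' -> tau0_bij f' Z -> tau0_bij g' Z -> tau0_bij g Z ->
  tau0_bij f Z.
Proof.
move=> Efg Hf' Hg' Hg; apply: (tau0_bij_cancel Hg).
by rewrite Efg; exact: tau0_bij_comp.
Qed.

Section TrivialFibration.
Variables (E B : sSet) (p : sMap E B).
Hypothesis p_trivial : trivial_fibration p.

Lemma trivial_fibration_section :
  exists s : sMap B E, forall m (x : B m), fn p (fn s x) = x.
Proof.
have [s [_ Hs]] := @trivial_fibration_rel_lift B E B p (fun _ _ => False)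
  (fun _ _ _ _ F => F) (fun _ _ F => match F with end) (fun _ _ _ _ F => match F with end)
  (sId B) (fun _ _ F => match F with end) p_trivial.
by exists s.
Qed.

Section SplitTrivialFibration.
Variables (s : sMap B E).
Hypothesis ps : forall m (x : B m), fn p (fn s x) = x.

Definition J_constant m (z : sProd E sJ m) : Prop := forall i, z.2 i = z.2 ord0.

Lemma J_constant_act m m' (f : hom m' m) z : J_constant z -> J_constant (act f z).
Proof. by move=> Hz i /=; rewrite !ffunE Hz (Hz (hfun f ord0)). Qed.

Definition homotopy_ends m (z : sProd E sJ m) (_ : J_constant z) : E m :=
  if z.2 ord0 then fn s (fn p z.1) else z.1.

Lemma homotopy_ends_nat m m' (f : hom m' m) z (h : J_constant z)
    (h' : J_constant (act f z)) :
  homotopy_ends h' = act f (homotopy_ends h).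
Proof. by rewrite /homotopy_ends /= ffunE h; case: (z.2 ord0); rewrite ?fn_nat. Qed.

Definition p_fst : sMap (sProd E sJ) B :=
  @SMap (sProd E sJ) B (fun m z => fn p z.1) (fun m m' f z => fn_nat p f z.1).

Lemma homotopy_ends_over m (z : sProd E sJ m) (h : J_constant z) :
  fn p (homotopy_ends h) = fn p_fst z.
Proof. by rewrite /homotopy_ends; case: (z.2 ord0); rewrite ?ps. Qed.

Lemma trivial_fibration_homotopy : exists H : sMap (sProd E sJ) E,
  (forall m (x : E m), fn H ((x, [ffun _ => false]) : sProd E sJ m) = x) /\
  (forall m (x : E m), fn H ((x, [ffun _ => true]) : sProd E sJ m) = fn s (fn p x)).
Proof.
have [H [H_ends _]] := trivial_fibration_rel_lift J_constant_act homotopy_ends_nat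
  homotopy_ends_over p_trivial.
have const m (x : E m) c : J_constant ((x, [ffun _ => c]) : sProd E sJ m).
  by move=> i; rewrite !ffunE.
by exists H; split => m x; rewrite (H_ends _ _ (const _ _ _)) /homotopy_ends ffunE.
Qed.

End SplitTrivialFibration.

Lemma trivial_fibration_tau0_bij Z : tau0_bij p Z.
Proof.
have [s ps] := trivial_fibration_section.
have [H [H0 H1]] := trivial_fibration_homotopy ps.
split.
- move=> g; exists (precomp0 s g); rewrite -precomp0_comp.
  exact: homotopy_tau1_iso (sComp s p) H0 H1 g.
- move=> h1 h2 /(tau1_iso_precomp0 s); rewrite -!precomp0_comp.
  by rewrite !(precomp0_id _ (u := sComp p s)).
Qed.

End TrivialFibration.

Lemma row0_proj_rowmap (X Y : bsSet) (f : bMap X Y) n :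
  sComp (row0_proj Y n) (rowmap f n) = sComp (rowmap f 0) (row0_proj X n).
Proof. by apply: sMap_eq => m x /=; rewrite bfn_nat. Qed.

Theorem proposition2p9 (X Y : bsSet) (f : bMap X Y) :
  vfibrant X -> vfibrant Y ->
  ((forall n : nat, wce (rowmap f n)) <-> wce (rowmap f 0)).
Proof.
move=> HX HY; split=> [Hf | Hf0 n Z HZ]; first exact: Hf 0.
have pX := trivial_fibration_tau0_bij (@row0_proj_trivial_fibration X n HX) Z.
have pY := trivial_fibration_tau0_bij (@row0_proj_trivial_fibration Y n HY) Z.
exact: tau0_bij_transfer (row0_proj_rowmap f n) pX (Hf0 Z HZ) pY.
Qed.
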